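(* For every $n\ge1$, $M_n$ is not a finitely generated $M_0$-module. Moreover, letting $B=K[x,y/x]_{(x,y/x)}$ (a regular local ring birationally dominating $A$) and $M_\infty=\bar\nu(B\setminus\{0\})$, the set $M_\infty$ is not a finitely generated $M_0$-module.
   Context: $K$ is an algebraically closed field, $A=K[x,y]_{(x,y)}$. Set $\bar\beta_0=1$, $\bar\beta_{i+1}=2\bar\beta_i+2^{-(i+1)}$. Let $P_0=x$, $P_1=y$, $P_{i+1}=P_i^2-P_0^{2^{i+1}}P_{i-1}$ ($i\ge1$). Let $\bar\nu$ be the valuation of $K(x,y)$ dominating $A$ for which $P_0,P_1,\dots$ is a (minimal) generating sequence with $\bar\nu(P_i)=\bar\beta_i$; its value group is $\bigcup_{i\ge0}2^{-i}\mathbb Z$ and $M_0=\bar\nu(A\setminus\{0\})=\sum_{i\ge0}\mathbb N\bar\beta_i$. Let $z=y/x$, $W_n=\{a_0+a_1z+\cdots+a_nz^n\mid a_j\in K[x,y]\}$ and $M_n=\{\bar\nu(f)\mid 0\ne f\in W_n\}$. A subset $F$ with $M_0+F\subseteq F$ is a finitely generated $M_0$-module if $F=\bigcup_{i=1}^k(M_0+m_i)$ for some $m_1,\dots,m_k\in F$. *)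

From HB Require Import structures.
From mathcomp Require Import all_boot all_order all_algebra.
Set Implicit Arguments. Unset Strict Implicit. Unset Printing Implicit Defensive.
Import Order.TTheory GRing.Theory Num.Theory.
Local Open Scope ring_scope.

(* K[x,y] is modelled as {poly {poly K}}: outer variable y, inner variable x. *)
Section Defs.
Variable K : closedFieldType.
Local Notation Pxy := {poly {poly K}}.

Definition varx : Pxy := ('X)%:P.
Definition vary : Pxy := 'X.

Definition at0 (f : Pxy) : K := (f.[0]).[0].

Fixpoint beta (i : nat) : rat :=
  match i with
  | 0 => 1
  | i'.+1 => 2 * beta i' + ((2 : rat) ^+ i'.+1)^-1
  end.

(* (P_i, P_(i+1)); P_0 = x, P_1 = y, P_(i+1) = P_i^2 - x^(2^(i+1)) P_(i-1) *)
Fixpoint Ppair (i : nat) : Pxy * Pxy :=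
  match i with
  | 0 => (varx, vary)
  | i'.+1 => let: (p, q) := Ppair i' in
             (q, q ^+ 2 - varx ^+ (2 ^ i'.+2)%N * p)
  end.
Definition P (i : nat) : Pxy := (Ppair i).1.

Definition Pmono (a : seq nat) : Pxy := \prod_(i < size a) P i ^+ (nth 0%N a i).
Definition Pmono_val (a : seq nat) : rat :=
  \sum_(i < size a) (nth 0%N a i)%:R * beta i.

(* nu : K[x,y] \ {0} -> Q, determining a valuation of K(x,y) (value on 0 irrelevant) *)
Definition is_valuation (nu : Pxy -> rat) : Prop :=
  (forall f g, f != 0 -> g != 0 -> nu (f * g) = nu f + nu g) /\
  (forall f g, f != 0 -> g != 0 -> f + g != 0 -> Num.min (nu f) (nu g) <= nu (f + g)).

(* nu dominates A = K[x,y]_(x,y): nu >= 0 on A, nu > 0 on its maximal ideal.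
   Elements of A are f/h with h(0,0) <> 0; nu(f/h) = nu f - nu h. *)
Definition dominates_A (nu : Pxy -> rat) : Prop :=
  forall f h, f != 0 -> h != 0 -> at0 h != 0 ->
    0 <= nu f - nu h /\ (at0 f = 0 -> 0 < nu f - nu h).

(* P_0, P_1, ... is a generating sequence: for every gamma the ideal
   {f in A | nu f >= gamma} is generated by the monomials in the P_i of value
   >= gamma. Equivalently: every nonzero f in K[x,y] lies, in A, in the ideal
   generated by the monomials of value >= nu f. *)
Definition generating_seq (nu : Pxy -> rat) : Prop :=
  (forall i, nu (P i) = beta i) /\
  forall f, f != 0 -> exists h : Pxy, at0 h != 0 /\
    exists s : seq (Pxy * seq nat),
      h * f = \sum_(c <- s) c.1 * Pmono c.2 /\
      forall c, c \in s -> nu f <= Pmono_val c.2.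

Definition is_nubar (nu : Pxy -> rat) : Prop :=
  is_valuation nu /\ dominates_A nu /\ generating_seq nu.

Definition M0 (nu : Pxy -> rat) (m : rat) : Prop :=
  exists f h : Pxy, f != 0 /\ h != 0 /\ at0 h != 0 /\ m = nu f - nu h.

(* M_n = nu(W_n \ {0}), W_n = {a_0 + a_1 z + ... + a_n z^n}, z = y/x;
   x^n (sum a_j z^j) = sum a_j y^j x^(n-j), so nu(sum a_j z^j) = nu(that) - n nu(x). *)
Definition Wn_num (n : nat) (a : nat -> Pxy) : Pxy :=
  \sum_(j < n.+1) a j * vary ^+ j * varx ^+ (n - j).
Definition Mn (nu : Pxy -> rat) (n : nat) (m : rat) : Prop :=
  exists a : nat -> Pxy, Wn_num n a != 0 /\ m = nu (Wn_num n a) - n%:R * nu varx.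

(* K[x,z] also modelled as {poly {poly K}} (outer variable z, inner x).
   For G in K[x,z] with N = size G, x^N G(x, y/x) = sum_j G_j(x) y^j x^(N-j). *)
Definition xz_num (G : Pxy) : Pxy :=
  \sum_(j < size G) (G`_j)%:P * vary ^+ j * varx ^+ (size G - j).
Definition nu_xz (nu : Pxy -> rat) (G : Pxy) : rat :=
  nu (xz_num G) - (size G)%:R * nu varx.

(* M_infty = nu(B \ {0}), B = K[x,z]_(x,z): elements G/H with H(0,0) <> 0 *)
Definition Minf (nu : Pxy -> rat) (m : rat) : Prop :=
  exists G H : Pxy, G != 0 /\ H != 0 /\ at0 H != 0 /\ m = nu_xz nu G - nu_xz nu H.

End Defs.

Definition fg_module (M0 F : rat -> Prop) : Prop :=
  exists ms : seq rat, (forall m, m \in ms -> F m) /\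
    forall u, F u <-> exists2 m, m \in ms & exists2 a, M0 a & u = (a + m)%R.

From HB Require Import structures.
From mathcomp Require Import all_boot all_order all_algebra.
Set Implicit Arguments. Unset Strict Implicit. Unset Printing Implicit Defensive.
Import Order.TTheory GRing.Theory Num.Theory.
Local Open Scope ring_scope.

(* Call q dyadic of level k if q lies in 2^-k Z.
   1. beta_i has level i, while beta_(i+1) does not have level i.
   2. By the generating-sequence property every value of a nonzero polynomial
      of K[x,y], hence every element of M_0, is a P-monomial value
      sum_i a_i beta_i; such a value below beta_(i+1) only involves
      beta_0, ..., beta_i and therefore has level i.
   3. Elements of W_n and of B = K[x,z]_(x,z) can be written f / x^N with
      f in K[x,y] of value >= N, so M_n and M_infty consist of nonnegative
      dyadic numbers (units of B having value 0).
   4. Since P_(i+1) lies in (x, y), P_(i+1)/x lies in W_1 and in B, so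
      beta_(i+1) - 1 belongs to M_n (n >= 1) and to M_infty.
   An abstract criterion (not_fg_module) concludes: finitely many generators
   share a level k, and writing beta_(k+1) - 1 = a + m with a in M_0 and
   m >= 0 a generator forces a < beta_(k+1), so beta_(k+1) has level k. *)

Section KeyPolynomials.
Variable K : closedFieldType.
Local Notation Pxy := {poly {poly K}}.

Lemma varx_neq0 : varx K != 0.
Proof. by rewrite /varx polyC_eq0 polyX_eq0. Qed.

Lemma vary_neq0 : vary K != 0.
Proof. by rewrite /vary polyX_eq0. Qed.

Lemma Ppair_succ1 (i : nat) : (Ppair K i.+1).1 = (Ppair K i).2.
Proof. by rewrite /=; case: (Ppair K i). Qed.

Lemma Ppair_succ2 (i : nat) : (Ppair K i.+1).2 =
  (Ppair K i).2 ^+ 2 - varx K ^+ (2 ^ i.+2)%N * (Ppair K i).1.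
Proof. by rewrite /=; case: (Ppair K i). Qed.

Lemma P_succ (i : nat) : P K i.+1 = (Ppair K i).2.
Proof. by rewrite /P Ppair_succ1. Qed.

Lemma Ppair_shape (i : nat) :
  [/\ (Ppair K i).1 != 0, (Ppair K i).2 \is monic &
      (size (Ppair K i).1 < size (Ppair K i).2)%N].
Proof.
elim: i => [|i [p0 qmonic ltpq]].
  by rewrite /= varx_neq0 /vary monicX /varx size_polyC polyX_eq0 size_polyX.
rewrite Ppair_succ1 Ppair_succ2.
set p := (Ppair K i).1; set q := (Ppair K i).2.
have q0 : q != 0 by apply: monic_neq0.
have p_gt0 : (0 < size p)%N by rewrite size_poly_gt0.
have size_q2 : (size q < size (q ^+ 2))%N.
  rewrite expr2 size_monicM // -subn1 -addnBA ?size_poly_gt0 //.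
  by rewrite -{1}[size q]addn0 ltn_add2l subn_gt0 (leq_ltn_trans _ ltpq).
have size_xp : size (varx K ^+ (2 ^ i.+2)%N * p) = size p.
  by rewrite /varx -rmorphXn size_Cmul // expf_neq0 // polyX_eq0.
have small : (size (- (varx K ^+ (2 ^ i.+2)%N * p)) < size (q ^+ 2))%N.
  by rewrite size_opp size_xp (ltn_trans ltpq).
split => //; last by rewrite size_polyDl.
by rewrite monicE lead_coefDl // -monicE monic_exp.
Qed.

Lemma P_neq0 (i : nat) : P K i != 0.
Proof. by case: (Ppair_shape i). Qed.

Lemma size_P_succ_gt1 (i : nat) : (1 < size (P K i.+1))%N.
Proof.
have [p0 _ ltpq] := Ppair_shape i.
by rewrite P_succ (leq_ltn_trans _ ltpq) // size_poly_gt0.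
Qed.

Lemma P_succ_in_xy (i : nat) :
  exists A B : Pxy, P K i.+1 = varx K * A + vary K * B.
Proof.
rewrite P_succ; elim: i => [|i [A [B HAB]]].
  by exists 0, 1; rewrite /= mulr0 add0r mulr1.
rewrite Ppair_succ2 HAB expr2.
have -> : (2 ^ i.+2 = (2 ^ i.+2).-1.+1)%N by rewrite prednK // expn_gt0.
rewrite exprS.
exists ((varx K * A + vary K * B) * A - varx K ^+ (2 ^ i.+2).-1 * (Ppair K i).1).
exists ((varx K * A + vary K * B) * B).
rewrite {1}[(_ + _) * (_ + _)]mulrDr mulrBr !mulrA.
by rewrite [_ * varx K]mulrC [_ * vary K]mulrC addrAC.
Qed.

Lemma at0_P_succ (i : nat) : at0 (P K i.+1) = 0.
Proof. by have [A [B ->]] := P_succ_in_xy i; rewrite /at0 /varx /vary !hornerE. Qed.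

End KeyPolynomials.

Definition dyadic (k : nat) (q : rat) : Prop := exists z : int, q * 2 ^+ k = z%:~R.

Lemma dyadic0 k : dyadic k 0.
Proof. by exists 0; rewrite mul0r. Qed.

Lemma dyadicD k p q : dyadic k p -> dyadic k q -> dyadic k (p + q).
Proof. by move=> [a Ha] [b Hb]; exists (a + b); rewrite mulrDl Ha Hb intrD. Qed.

Lemma dyadicN k p : dyadic k p -> dyadic k (- p).
Proof. by move=> [a Ha]; exists (- a); rewrite mulNr Ha intrN. Qed.

Lemma dyadic_nat k n : dyadic k n%:R.
Proof. by exists (n * 2 ^ k)%N; rewrite -natrX -natrM. Qed.

Lemma dyadic_natM k n p : dyadic k p -> dyadic k (n%:R * p).
Proof. by move=> [a Ha]; exists (n%:Z * a); rewrite -mulrA Ha intrM. Qed.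

Lemma dyadic_mono k l p : (k <= l)%N -> dyadic k p -> dyadic l p.
Proof.
move=> /subnK <-; elim: (l - k)%N => [|m IH] // /IH [a Ha].
by exists (a * 2); rewrite addSn exprSr mulrA Ha intrM.
Qed.

Lemma dyadic_common_level (ms : seq rat) :
  (forall m, m \in ms -> exists k, dyadic k m) ->
  exists k, forall m, m \in ms -> dyadic k m.
Proof.
elim: ms => [|x ms IH] Hms; first by exists 0%N.
have [k1 Hk1] := Hms x (mem_head _ _).
have [k2 Hk2] : exists k, forall m, m \in ms -> dyadic k m.
  by apply: IH => m Hm; apply: Hms; rewrite inE Hm orbT.
exists (maxn k1 k2) => m; rewrite inE => /orP [/eqP ->|Hm].
  exact: dyadic_mono (leq_maxl _ _) Hk1.
exact: dyadic_mono (leq_maxr _ _) (Hk2 m Hm).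
Qed.

(* beta_i has level i, but beta_(i+1) does not have level i: the new
   summand 2^-(i+1) is not in 2^-i Z. *)
Lemma beta_dyadic j : dyadic j (beta j).
Proof.
elim: j => [|j [a Ha]]; first by exists 1; rewrite /= mulr1.
exists (a * 4 + 1).
rewrite /= mulrDl intrD intrM mulVf ?expf_neq0 //.
congr (_ + _); rewrite -Ha exprS.
have -> : (4%:~R : rat) = 2 * 2 by [].
by rewrite mulrACA mulrC.
Qed.

Lemma half_not_int (z : int) : (2 : rat)^-1 != z%:~R.
Proof.
have h0 : (0 : rat) < 2^-1 by rewrite invr_gt0.
have h1 : (2 : rat)^-1 < 1 by rewrite invf_lt1 // ltr1n.
have [z_le0|z_gt0] := lerP z 0.
  by rewrite gt_eqF // (le_lt_trans _ h0) // lerz0.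
by rewrite lt_eqF // (lt_le_trans h1) //; rewrite gtz0_ge1 -(ler_int rat) in z_gt0.
Qed.

Lemma beta_succ_not_dyadic i : ~ dyadic i (beta i.+1).
Proof.
move=> [z Hz]; have [a Ha] := beta_dyadic i.
move: Hz; rewrite /= mulrDl exprS invfM -mulrA Ha divfK ?expf_neq0 // => Hz.
apply/negP: (half_not_int (z - 2 * a)); apply/negPn/eqP.
rewrite intrB -Hz intrM.
have -> : (2%:~R : rat) = 2 by [].
by rewrite addrAC subrr add0r.
Qed.

Lemma beta_gt0 j : 0 < beta j.
Proof.
elim: j => [|j IH] //=.
by rewrite ltr_wpDr // ?invr_ge0 ?exprn_ge0 // mulr_gt0.
Qed.

Lemma beta_mono i j : (i <= j)%N -> beta i <= beta j.
Proof.
move=> /subnK <-; elim: (j - i)%N => [|m IH] //.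
apply: (le_trans IH); rewrite addSn /=.
rewrite -[X in X <= _]addr0 lerD ?invr_ge0 ?exprn_ge0 //.
by rewrite ler_peMl ?ltW ?beta_gt0 // ler1n.
Qed.

Lemma beta1_gt1 : 1 < beta 1.
Proof.
have -> : beta 1 = 2 + 2^-1 by rewrite /= mulr1 expr1.
by rewrite (@lt_le_trans _ _ 2) ?ltr1n // lerDl invr_ge0.
Qed.

Lemma Pmono_val_dyadic (s : seq nat) : dyadic (size s) (Pmono_val s).
Proof.
rewrite /Pmono_val; elim/big_ind: _ => [|x y|j _]; [exact: dyadic0|exact: dyadicD|].
exact/dyadic_natM/(dyadic_mono (ltnW (ltn_ord j)))/beta_dyadic.
Qed.

(* A P-monomial of value < beta_(i+1) only involves P_0, ..., P_i,
   so its value has level i. *)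
Lemma small_Pmono_val_dyadic (s : seq nat) i :
  Pmono_val s < beta i.+1 -> dyadic i (Pmono_val s).
Proof.
move=> small; rewrite /Pmono_val; elim/big_ind: _ => [|x y|j _].
- exact: dyadic0.
- exact: dyadicD.
have [ji|ij] := leqP j i; first exact/dyadic_natM/(dyadic_mono ji)/beta_dyadic.
have [->|sj] := eqVneq (nth 0%N s j) 0%N; first by rewrite mul0r; exact: dyadic0.
exfalso; move: small; apply/negP; rewrite -leNgt /Pmono_val (bigD1 j) //.
rewrite -[beta i.+1]addr0 lerD ?sumr_ge0 // => [|k _]; last first.
  by rewrite mulr_ge0 ?ler0n ?ltW ?beta_gt0.
rewrite -[beta i.+1]mul1r ler_pM // ?ler1n ?lt0n //; first exact: ltW (beta_gt0 _).
exact: beta_mono.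
Qed.

(* If the values of M are P-monomial
   values and F consists of nonnegative dyadic numbers containing every
   beta_(i+1) - 1, then F is not a finitely generated M-module: a common level
   k of the generators would give beta_(k+1) = (a + m) + 1 with a of level k. *)
Lemma not_fg_module (M F : rat -> Prop) :
  (forall a, M a -> exists s, a = Pmono_val s) ->
  (forall u, F u -> 0 <= u /\ exists k, dyadic k u) ->
  (forall i, F (beta i.+1 - 1)) ->
  ~ fg_module M F.
Proof.
move=> M_mono F_dyadic F_beta [ms [ms_F F_gen]].
have [k ms_k] : exists k, forall m, m \in ms -> dyadic k m.
  by apply: dyadic_common_level => m /ms_F /F_dyadic [].
have [m m_ms [a Ma Hbeta]] := (F_gen (beta k.+1 - 1)).1 (F_beta k).
have [s Hs] := M_mono a Ma.
have m_ge0 : 0 <= m by case: (F_dyadic m (ms_F m m_ms)).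
have a_k : dyadic k a.
  rewrite Hs; apply: small_Pmono_val_dyadic; rewrite -Hs.
  have -> : a = beta k.+1 - 1 - m by rewrite Hbeta addrK.
  by rewrite -addrA gtrDl subr_lt0 (lt_le_trans _ m_ge0) // oppr_lt0.
apply: (@beta_succ_not_dyadic k).
rewrite -[beta k.+1](subrK 1) Hbeta.
exact/dyadicD/(dyadic_nat k 1)/dyadicD/ms_k.
Qed.

Section Valuation.
Variable K : closedFieldType.
Local Notation Pxy := {poly {poly K}}.
Local Notation x := (varx K).
Local Notation y := (vary K).
Variable nu : Pxy -> rat.
Hypothesis nu_valuation : is_valuation nu.
Hypothesis nu_dominates : dominates_A nu.
Hypothesis nu_generating : generating_seq nu.

Lemma nuM (f g : Pxy) : f != 0 -> g != 0 -> nu (f * g) = nu f + nu g.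
Proof. by case: nu_valuation => H _; apply: H. Qed.

Lemma nuD (f g : Pxy) : f != 0 -> g != 0 -> f + g != 0 ->
  Num.min (nu f) (nu g) <= nu (f + g).
Proof. by case: nu_valuation => _ H; apply: H. Qed.

Lemma nu1 : nu 1 = 0.
Proof.
have := nuM (oner_neq0 Pxy) (oner_neq0 Pxy); rewrite mulr1 -{1}[nu 1]addr0.
by move/addrI => <-.
Qed.

Lemma nuX (f : Pxy) (k : nat) : f != 0 -> nu (f ^+ k) = k%:R * nu f.
Proof.
move=> f0; elim: k => [|k IH]; first by rewrite expr0 nu1 mul0r.
by rewrite exprS nuM ?expf_neq0 // IH mulrSr mulrDl mul1r addrC.
Qed.

Lemma nuN (f : Pxy) : f != 0 -> nu (- f) = nu f.
Proof.
move=> f0; have m10 : (-1 : Pxy) != 0 by rewrite oppr_eq0 oner_neq0.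
have : nu (-1 * -1) = nu (-1) + nu (-1) by rewrite nuM.
rewrite mulrNN mulr1 nu1 => /eqP; rewrite eq_sym -mulr2n -mulr_natr mulf_eq0 /=.
rewrite pnatr_eq0 orbF => /eqP nu_m1.
by rewrite -mulN1r nuM // nu_m1 add0r.
Qed.

Lemma at0_neq0 (h : Pxy) : at0 h != 0 -> h != 0.
Proof. by apply: contra => /eqP ->; rewrite /at0 !horner0. Qed.

Lemma nu_ge0 (f : Pxy) : f != 0 -> 0 <= nu f.
Proof.
move=> f0; have [] := nu_dominates f0 (oner_neq0 Pxy).
  by rewrite /at0 !hornerC oner_neq0.
by rewrite nu1 subr0.
Qed.

Lemma nu_unit (h : Pxy) : at0 h != 0 -> nu h = 0.
Proof.
move=> h0; have [] := nu_dominates (oner_neq0 Pxy) (at0_neq0 h0) h0.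
by rewrite nu1 sub0r oppr_ge0 => nu_le0 _; apply/eqP; rewrite eq_le nu_le0 nu_ge0 ?at0_neq0.
Qed.

Lemma nu_P i : nu (P K i) = beta i.
Proof. by case: nu_generating => ->. Qed.

Lemma nu_varx : nu x = 1.
Proof. exact: (nu_P 0). Qed.

Lemma nu_Pmono (s : seq nat) : Pmono K s != 0 /\ nu (Pmono K s) = Pmono_val s.
Proof.
rewrite /Pmono /Pmono_val.
apply: (big_ind2 (fun p q => p != 0 /\ nu p = q)) => [|p1 p2 q1 q2 [p10 <-] [p20 <-]|j _].
- by rewrite oner_neq0 nu1.
- by rewrite mulf_neq0 // nuM.
- by rewrite expf_neq0 ?P_neq0 // nuX ?P_neq0 // nu_P.
Qed.

Lemma nu_sum_witness (I : eqType) (r : seq I) (F : I -> Pxy) :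
  \sum_(i <- r) F i != 0 ->
  exists i, [/\ i \in r, F i != 0 & nu (F i) <= nu (\sum_(i <- r) F i)].
Proof.
elim: r => [|i0 r IH]; first by rewrite big_nil eqxx.
rewrite big_cons => S0.
have [Fi00|Fi00] := eqVneq (F i0) 0.
  move: S0; rewrite Fi00 add0r => /IH [i [ir Fi0 Hi]].
  by exists i; rewrite inE ir orbT.
have [R0|R0] := eqVneq (\sum_(i <- r) F i) 0.
  by exists i0; rewrite inE eqxx R0 addr0.
have := nuD Fi00 R0 S0.
have [le_i0|lt_r] := leP (nu (F i0)) (nu (\sum_(i <- r) F i)).
  by move=> Hmin; exists i0; rewrite inE eqxx.
move=> Hmin; have [i [ir Fi0 Hi]] := IH R0.
by exists i; rewrite inE ir orbT; split => //; apply: le_trans Hi Hmin.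
Qed.

Lemma nu_sum_ge (I : eqType) (r : seq I) (F : I -> Pxy) (c : rat) :
  \sum_(i <- r) F i != 0 ->
  (forall i, i \in r -> F i != 0 -> c <= nu (F i)) ->
  c <= nu (\sum_(i <- r) F i).
Proof. by move=> /nu_sum_witness [i [ir Fi0 Hi]] Hc; apply: le_trans (Hc i ir Fi0) Hi. Qed.

Lemma nu_add_larger (a b : Pxy) : a != 0 -> (b = 0 \/ (b != 0 /\ nu a < nu b)) ->
  a + b != 0 /\ nu (a + b) = nu a.
Proof.
move=> a0 [->|[b0 lt_ab]]; first by rewrite addr0.
have ab0 : a + b != 0.
  apply/negP => /eqP ab0; have b_eq : b = - a by apply/eqP; rewrite -addr_eq0 addrC ab0.
  by move: lt_ab; rewrite b_eq nuN // ltxx.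
split => //.
have ge_ab := nuD a0 b0 ab0.
have ge_a : Num.min (nu (a + b)) (nu (- b)) <= nu a.
  have nb0 : - b != 0 by rewrite oppr_eq0.
  by have := @nuD (a + b) (- b) ab0 nb0; rewrite addrK; apply.
rewrite nuN // ge_min in ge_a; rewrite ge_min in ge_ab.
case/orP: ge_a => [ge_a|]; last by rewrite leNgt lt_ab.
apply/eqP; rewrite eq_le ge_a /=.
by case/orP: ge_ab => // ge_ab; apply: le_trans (ltW lt_ab) ge_ab.
Qed.

Lemma nu_is_Pmono_val (f : Pxy) : f != 0 -> exists s, nu f = Pmono_val s.
Proof.
move=> f0; case: nu_generating => _ /(_ f f0) [h [h0 [s [Hs Hle]]]].
have hf0 : h * f != 0 by rewrite mulf_neq0 // at0_neq0.
have := hf0; rewrite Hs => /nu_sum_witness [c [cs c0 Hc]].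
exists c.2; rewrite -Hs in Hc.
have c10 : c.1 != 0 by apply: contra c0 => /eqP ->; rewrite mul0r.
have [Pm0 Pmv] := nu_Pmono c.2.
rewrite (nuM c10 Pm0) Pmv (nuM (at0_neq0 h0) f0) (nu_unit h0) add0r in Hc.
apply/eqP; rewrite eq_le Hle //=.
by apply: le_trans Hc; rewrite lerDr nu_ge0.
Qed.

Lemma M0_Pmono_val a : M0 nu a -> exists s, a = Pmono_val s.
Proof.
by move=> [f [h [f0 [h0 [h1 ->]]]]]; rewrite (nu_unit h1) subr0; apply: nu_is_Pmono_val.
Qed.

Lemma nu_sub_nat_dyadic (f : Pxy) (N : nat) : f != 0 -> exists k, dyadic k (nu f - N%:R).
Proof.
move=> /nu_is_Pmono_val [s ->]; exists (size s).
exact/dyadicD/dyadicN/dyadic_nat/Pmono_val_dyadic.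
Qed.

Lemma nu_term_ge (c : Pxy) (j N : nat) : (j <= N)%N -> c * y ^+ j * x ^+ (N - j) != 0 ->
  N%:R + j%:R * (beta 1 - 1) <= nu (c * y ^+ j * x ^+ (N - j)).
Proof.
move=> jN t0.
have c0 : c != 0 by apply: contra t0 => /eqP ->; rewrite !mul0r.
rewrite !nuM ?mulf_neq0 ?expf_neq0 ?vary_neq0 ?varx_neq0 //.
rewrite !nuX ?vary_neq0 ?varx_neq0 // nu_varx (nu_P 1) mulr1 natrB //.
have -> : N%:R + j%:R * (beta 1 - 1) = 0 + j%:R * beta 1 + (N%:R - j%:R) :> rat.
  by rewrite mulrBr mulr1 add0r addrCA addrC.
by rewrite lerD2r lerD2r nu_ge0.
Qed.

(* Hence a nonzero sum of such terms has value at least N: elements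
   (sum_j c_j y^j x^(N-j)) / x^N of W_N and of B have nonnegative value. *)
Lemma nu_shifted_sum_ge (m N : nat) (c : nat -> Pxy) : (m <= N.+1)%N ->
  \sum_(j < m) c j * y ^+ j * x ^+ (N - j) != 0 ->
  N%:R <= nu (\sum_(j < m) c j * y ^+ j * x ^+ (N - j)).
Proof.
move=> mN S0; apply: nu_sum_ge => // j _ t0.
apply: le_trans (nu_term_ge _ t0); last exact: leq_trans (ltn_ord j) mN.
by rewrite lerDl mulr_ge0 // subr_ge0 ltW ?beta1_gt1.
Qed.

(* x^k P_i / x^(k+1) = P_i / x has value beta_i - 1. *)
Lemma nu_P_div_x (k i : nat) : nu (x ^+ k * P K i) - k.+1%:R = beta i - 1.
Proof.
rewrite nuM ?expf_neq0 ?varx_neq0 ?P_neq0 // nuX ?varx_neq0 // nu_varx nu_P mulr1.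
by rewrite -natr1 opprD addrA [k%:R + _]addrC addrK.
Qed.

Lemma Mn_dyadic n u : Mn nu n u -> 0 <= u /\ exists k, dyadic k u.
Proof.
move=> [a [W0 ->]]; rewrite nu_varx mulr1; split.
  by rewrite subr_ge0; apply: nu_shifted_sum_ge.
exact: nu_sub_nat_dyadic.
Qed.

(* For n >= 1, P_(i+1)/x = A + B z lies in W_n, where P_(i+1) = A x + B y. *)
Lemma Mn_contains_beta n i : (1 <= n)%N -> Mn nu n (beta i.+1 - 1).
Proof.
case: n => [|n] // _.
have [A [B HAB]] := P_succ_in_xy K i.
pose a j := if j == 0%N then A else if j == 1%N then B else 0.
have W_eq : Wn_num n.+1 a = x ^+ n * P K i.+1.
  rewrite /Wn_num !big_ord_recl big1 => [|j _]; last by rewrite /a /= !mul0r.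
  rewrite /a /= addr0 expr0 mulr1 subSS !subn0 HAB mulrDr exprS.
  congr (_ + _); first by rewrite mulrC mulrA [x * _]mulrC.
  by rewrite /= expr1 mulrC [y * B]mulrC.
exists a; rewrite W_eq; split; first by rewrite mulf_neq0 ?expf_neq0 ?varx_neq0 ?P_neq0.
by rewrite nu_varx mulr1 nu_P_div_x.
Qed.

Lemma xz_num_poly (G : Pxy) :
  xz_num G = \poly_(j < size G) (G`_j * 'X^(size G - j)).
Proof.
rewrite /xz_num poly_def; apply: eq_bigr => j _.
by rewrite /varx /vary -rmorphXn mulrAC -polyCM mul_polyC.
Qed.

(* The leading y-coefficient of xz_num G is the x-shifted leading coefficient of G. *)
Lemma xz_num_neq0 (G : Pxy) : G != 0 -> xz_num G != 0.
Proof.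
move=> G0; rewrite xz_num_poly; apply/eqP => /(congr1 (fun p : Pxy => p`_(size G).-1)).
rewrite coef_poly coef0.
have -> : ((size G).-1 < size G)%N by rewrite prednK ?size_poly_gt0.
move=> /eqP.
by rewrite mulf_eq0 expf_eq0 polyX_eq0 andbF orbF -lead_coefE lead_coef_eq0 (negPf G0).
Qed.

Lemma nu_xz_dyadic (G : Pxy) : G != 0 ->
  0 <= nu_xz nu G /\ exists k, dyadic k (nu_xz nu G).
Proof.
move=> /xz_num_neq0 W0; rewrite /nu_xz nu_varx mulr1; split.
  by rewrite subr_ge0; apply: (@nu_shifted_sum_ge _ _ (fun j => (G`_j)%:P)).
exact: nu_sub_nat_dyadic.
Qed.

(* A unit H of B has value 0: in x^N H(x, y/x) the term H_0 x^N has value N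
   while every term involving y has strictly larger value. *)
Lemma nu_xz_unit (H : Pxy) : at0 H != 0 -> nu_xz nu H = 0.
Proof.
move=> H1; rewrite /nu_xz nu_varx mulr1 /xz_num.
case E : (size H) => [|N]; first by move: (at0_neq0 H1); rewrite -size_poly_gt0 E.
rewrite big_ord_recl subn0 expr0 mulr1.
set t0 := (H`_0)%:P * _; set R := \sum_(i < N) _.
have c0 : at0 (H`_0)%:P != 0 by rewrite /at0 hornerC -horner_coef0.
have t0_0 : t0 != 0 by rewrite mulf_neq0 ?expf_neq0 ?varx_neq0 ?at0_neq0.
have t0_val : nu t0 = N.+1%:R.
  by rewrite nuM ?expf_neq0 ?varx_neq0 ?at0_neq0 // nu_unit // nuX ?varx_neq0 // nu_varx mulr1 add0r.
have R_larger : R = 0 \/ (R != 0 /\ nu t0 < nu R).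
  have [->|R0] := eqVneq R 0; [by left | right; split => //].
  rewrite t0_val; apply: (@lt_le_trans _ _ (N.+1%:R + (beta 1 - 1))).
    by rewrite ltrDl subr_gt0 beta1_gt1.
  apply: nu_sum_ge => // j _ tj; apply: le_trans (nu_term_ge _ tj); last first.
    exact: ltnW (ltn_ord _).
  by rewrite lerD2l ler_peMl ?ler1n // subr_ge0 (ltW beta1_gt1).
by have [_ ->] := nu_add_larger t0_0 R_larger; rewrite t0_val subrr.
Qed.

(* If f lies in the ideal (x, y), then f / x lies in K[x,z]. *)
Lemma xz_num_div_x (f : Pxy) : (1 < size f)%N -> at0 f = 0 ->
  exists G : Pxy, size G = size f /\ xz_num G = x ^+ (size f).-1 * f.
Proof.
move=> size_f f00; set N := size f.
set g0 := drop_poly 1 f`_0.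
have f0_eq : f`_0 = 'X * g0.
  apply/polyP => [[|k]]; rewrite coefXM /=; last by rewrite coef_drop_poly addn1.
  by move: f00; rewrite /at0 !horner_coef0.
pose G := \poly_(k < N) (if k == 0%N then g0 else f`_k * 'X^(k.-1)).
have sG : size G = N.
  rewrite size_poly_eq //.
  have -> : (N.-1 == 0%N) = false by apply/negbTE; rewrite -lt0n -ltnS prednK // ltnW.
  by rewrite -lead_coefE mulf_neq0 ?expf_neq0 ?polyX_eq0 // lead_coef_eq0 -size_poly_gt0 ltnW.
exists G; split => //; rewrite xz_num_poly sG; apply/polyP => k.
rewrite coef_poly /varx -rmorphXn coefCM coef_poly.
case: (ltnP k N) => kN; last by rewrite nth_default // mulr0.
case: k kN => [|k] kN /=; first by rewrite f0_eq subn0 mulrA -exprSr prednK 1?ltnW // mulrC.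
rewrite -mulrA -exprD mulrC; congr (_ * _); congr ('X^_).
by rewrite addnBA 1?ltnW // -addn1 subnDl subn1.
Qed.

Lemma Minf_dyadic u : Minf nu u -> 0 <= u /\ exists k, dyadic k u.
Proof.
by move=> [G [H [G0 [H0 [H1 ->]]]]]; rewrite (nu_xz_unit H1) subr0; apply: nu_xz_dyadic.
Qed.

Lemma Minf_contains_beta i : Minf nu (beta i.+1 - 1).
Proof.
have size_f := size_P_succ_gt1 K i.
have [G [sG G_eq]] := xz_num_div_x size_f (at0_P_succ K i).
have unit1 : at0 (1 : Pxy) != 0 by rewrite /at0 !hornerC oner_neq0.
exists G, 1; split; first by rewrite -size_poly_gt0 sG ltnW.
split; first exact: oner_neq0.
split => //; rewrite (nu_xz_unit unit1) subr0 /nu_xz G_eq sG nu_varx mulr1.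
by rewrite -{2}(prednK (ltnW size_f)) nu_P_div_x.
Qed.

End Valuation.

Theorem mainTheorem15 (K : closedFieldType) (nu : {poly {poly K}} -> rat) :
  is_nubar nu ->
  (forall n : nat, (1 <= n)%N -> ~ fg_module (M0 nu) (Mn nu n)) /\
  ~ fg_module (M0 nu) (Minf nu).
Proof.
move=> [nu_val [nu_dom nu_gen]].
have M0_mono := M0_Pmono_val nu_val nu_dom nu_gen.
split=> [n n_ge1|]; apply: not_fg_module M0_mono _ _.
- exact: Mn_dyadic nu_val nu_dom nu_gen n.
- by move=> i; apply: Mn_contains_beta.
- exact: Minf_dyadic nu_val nu_dom nu_gen.
- exact: Minf_contains_beta nu_val nu_dom nu_gen.
Qed.
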